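(* Let $\mathcal X=(x_n)_{n\in\mathbb N}$ be a fundamental minimal system for $\mathbb X$ whose dual system $\mathcal X^*=(x_n^* )$ satisfies $\alpha_2:=\sup_n\|x_n^*\|<\infty$. If $\langle\mathcal X^*\rangle$ is not a norming subspace of $\mathbb X^*$, then for every $\epsilon>0$, $r>0$ and $m\in\mathbb N$ there is $f\in\mathbb X$ such that: (i) $f\in\langle\mathcal X_{>m}\rangle$ and $\|f\|=r$; (ii) $\|f\|_\infty<\epsilon$; (iii) for each $n>m$ and each $\delta>0$ there is $g\in\langle\mathcal X_{>n}\rangle$ with $\|g\|_\infty<\delta$ and $\|f+g\|<\epsilon$.
   Context: Throughout, $\mathbb X$ is an infinite-dimensional separable Banach space over $\mathbb F\in\{\mathbb R,\mathbb C\}$. A (fundamental minimal) system for $\mathbb X$ is a sequence $\mathcal X=(x_n)_{n\in\mathbb N}\subset\mathbb X$ whose linear span $\langle\mathcal X\rangle$ is dense in $\mathbb X$ and for which there is a sequence $\mathcal X^*=(x_n^* )_{n\in\mathbb N}\subset\mathbb X^*$ with $x_n^*(x_k)=\delta_{nk}$ for all $n,k$; $\mathcal X^*$ is called the dual system. For $f\in\mathbb X$, $\|f\|_\infty:=\sup_n|x_n^*(f)|$. For $m\in\mathbb N$, $\mathcal X_{>m}=(x_n)_{n>m}$ and $\langle\mathcal X_{>m}\rangle$ is its linear span. A subspace $\mathbb Z\subset\mathbb X^*$ is norming if there is $c\in(0,1]$ with $c\|f\|\le\sup\{|f^*(f)|: f^*\in\mathbb Z,\ \|f^*\|=1\}$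 for all $f\in\mathbb X$. *)

From HB Require Import structures.
From mathcomp Require Import all_boot all_order all_algebra.
From mathcomp Require Import all_classical all_reals all_analysis.
From mathcomp Require Export complex.
Import Order.TTheory GRing.Theory Num.Theory.
Import numFieldNormedType.Exports.
Set Implicit Arguments.
Unset Strict Implicit.
Unset Printing Implicit Defensive.
Local Open Scope ring_scope.
Local Open Scope classical_set_scope.

Section Defs.
Context {K : numFieldType} {X : normedModType K}.

Definition dual_elem (g : X -> K) : Prop :=
  (forall (a : K) (u v : X), g (a *: u + v) = a * g u + g v) /\ continuous g.

Definition is_sup (S : set K) (r : K) : Prop :=
  (forall s, S s -> s <= r) /\ (forall t, t < r -> exists2 s, S s & t < s).

Definition dual_norm (g : X -> K) (r : K) : Prop :=
  is_sup [set `|g x| | x in [set x : X | `|x| <= 1]] r.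

Definition span_seq (x : nat -> X) : set X :=
  [set v | exists (N : nat) (c : nat -> K), v = \sum_(i < N) c i *: x i].

Definition span_gt (x : nat -> X) (m : nat) : set X :=
  [set v | exists (N : nat) (c : nat -> K), v = \sum_(m.+1 <= i < N) c i *: x i].

Definition dual_span (xs : nat -> X -> K) : set (X -> K) :=
  [set g | exists (N : nat) (c : nat -> K),
           g = (fun v => \sum_(i < N) c i * xs i v)].

Definition fund_min_system (x : nat -> X) (xs : nat -> X -> K) : Prop :=
  closure (span_seq x) = setT /\
  (forall n, dual_elem (xs n)) /\
  (forall n k, xs n (x k) = (n == k)%:R).

(* ||f||_oo < e, where ||f||_oo = sup_n |x_n^*(f)|. *)
Definition supnorm_lt (xs : nat -> X -> K) (f : X) (e : K) : Prop :=
  exists2 e' : K, e' < e & forall n, `|xs n f| <= e'.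

(* A subspace Z of X^* is norming: there is c in (0,1] with
   c ||f|| <= sup { |g f| : g in Z, ||g|| = 1 } for all f. *)
Definition norming (Z : set (X -> K)) : Prop :=
  exists2 c : K, 0 < c <= 1 &
    forall f : X, forall t : K, t < c * `|f| ->
      exists g, [/\ Z g, dual_norm g 1 & t < `|g f|].

End Defs.

Definition lemma3p7_for (K : numFieldType) (X : completeNormedModType K) : Prop :=
  forall (x : nat -> X) (xs : nat -> X -> K),
    fund_min_system x xs ->
    (exists alpha2 : K, forall n r, dual_norm (xs n) r -> r <= alpha2) ->
    ~ norming (dual_span xs) ->
    forall (eps r : K) (m : nat), 0 < eps -> 0 < r ->
      exists f : X,
        [/\ span_gt x m f, `|f| = r,
            supnorm_lt xs f eps &
            forall n : nat, (m < n)%N -> forall delta : K, 0 < delta ->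
              exists g : X,
                [/\ span_gt x n g, supnorm_lt xs g delta & `|f + g| < eps]].

From HB Require Import structures.
From mathcomp Require Import all_boot all_order all_algebra.
From mathcomp Require Import all_classical all_reals all_analysis.
From mathcomp Require Import complex.
From mathcomp Require Import ring lra.
Import Order.TTheory GRing.Theory Num.Theory.
Import numFieldNormedType.Exports.
Set Implicit Arguments.
Unset Strict Implicit.
Unset Printing Implicit Defensive.
Local Open Scope ring_scope.
Local Open Scope classical_set_scope.
Local Open Scope complex_scope.
Local Notation Re := complex.Re.
Local Notation Im := complex.Im.

(* A complex Banach space is treated as a real one, with the system
   x_0, i x_0, x_1, i x_1, ... and the real and imaginary parts of the x_n^* as
   coordinate functionals, so everything reduces to a real space V with a
   biorthogonal system (y_k, y_k^* ) whose coordinate functionals are uniformly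
   bounded and whose span is dense.

   Since <y^*> is not norming, for every kappa > 0 some unit vector v satisfies
   |phi v| <= kappa for every phi in <y^*> of norm at most 1.  Approximating v
   by a finite combination, deleting the coordinates of index <= m and
   rescaling gives f in <y_{>m}> with ||f|| = r on which <y^*> is still nearly
   zero; in particular all coordinates of f are small.

   For the correction g, consider the sublinear functional
     q(u) = inf { ||u + g|| + (eps / delta) t : g in <y_{>n}>, |y_k^*(g)| <= t }.
   If no admissible g existed, then q(f) >= eps.  A Hahn-Banach extension along
   f, y_0, y_1, ... gives a functional W <= q with W(f) = q(f); since q is small
   on tails, the values W(y_k), k > n, are absolutely summable, so a long enough
   truncation of W is an element of <y^*> of norm close to 1 whose value at f is
   at least eps, contradicting the choice of f. *)

Lemma big_ord_suffix0 (Z : zmodType) N1 N (F : nat -> Z) :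
  (N1 <= N)%N -> (forall i, (N1 <= i)%N -> F i = 0) ->
  \sum_(i < N1) F i = \sum_(i < N) F i.
Proof.
move=> hN hF; rewrite (big_ord_widen N) // big_mkcond /=; apply: eq_bigr => i _.
by case: ifP => // /negbT; rewrite -leqNgt => /hF ->.
Qed.

Lemma big_ord_prefix0 (Z : zmodType) m N (F : nat -> Z) :
  (forall i, (i <= m)%N -> F i = 0) -> \sum_(i < N) F i = \sum_(m.+1 <= i < N) F i.
Proof.
move=> hF; elim: N => [|N IH]; first by rewrite big_ord0 big_geq.
rewrite big_ord_recr /= IH; case: (leqP m.+1 N) => h; first by rewrite [RHS]big_nat_recr.
by rewrite hF ?addr0 ?big_geq // ltnW.
Qed.

Lemma big_ord_double (Z : zmodType) N (F : nat -> Z) :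
  \sum_(k < N.*2) F k = \sum_(j < N) (F j.*2 + F j.*2.+1).
Proof.
elim: N => [|N IH]; first by rewrite !big_ord0.
by rewrite doubleS !big_ord_recr /= IH addrA.
Qed.

Lemma ler_addgt0_scaled (R : realFieldType) (a b k : R) : 0 <= k ->
  (forall e, 0 < e -> a <= b + k * e) -> a <= b.
Proof.
move=> k0 h; apply/ler_addgt0Pr => e e0.
have k1 : 0 < k + 1 by lra.
apply: le_trans (h _ (divr_gt0 e0 k1)) _.
by rewrite lerD2l mulrA ler_pdivrMr //; nra.
Qed.

Section SequentialHahnBanach.
Variables (R : realType) (V : lmodType R) (p : V -> R).
Hypothesis p_subadd : forall u v, p (u + v) <= p u + p v.
Hypothesis p_subhom : forall (s : R) u, 0 < s -> p (s *: u) <= s * p u.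

Lemma sublinear_hom (s : R) u : 0 < s -> p (s *: u) = s * p u.
Proof.
move=> s0; apply/le_anti; rewrite p_subhom //=.
have si0 : 0 < s^-1 by rewrite invr_gt0.
have := @p_subhom s^-1 (s *: u) si0; rewrite scalerA mulVf ?gt_eqF // scale1r.
by rewrite -(ler_pM2l s0) mulrA mulfV ?gt_eqF // mul1r.
Qed.

Lemma sublinear0 : p 0 = 0.
Proof. by have := @sublinear_hom 2 0 (ltr0Sn _ 1); rewrite scaler0; lra. Qed.

Section Extension.
Variable e : nat -> V.

Definition comb k (c : nat -> R) := \sum_(i < k) c i *: e i.

Lemma combS k c : comb k.+1 c = comb k c + c k *: e k.
Proof. by rewrite /comb big_ord_recr. Qed.

Lemma combZ k a c : comb k (fun i => a * c i) = a *: comb k c.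
Proof. by rewrite /comb scaler_sumr; apply: eq_bigr => i _; rewrite scalerA. Qed.

Lemma combD k c d : comb k (fun i => c i + d i) = comb k c + comb k d.
Proof. by rewrite /comb -big_split; apply: eq_bigr => i _; rewrite scalerDl. Qed.

Definition extension_value k (f : nat -> R) :=
  sup [set \sum_(j < k) c j * f j - p (comb k c - e k) | c in [set: nat -> R]].

(* The one-dimensional Hahn-Banach step: each lower bound phi d - p (comb d - e k)
   lies below each upper bound p (comb d + e k) - phi d, so their supremum is an
   admissible value at e k. *)
Lemma extension_value_dominated k (f : nat -> R) :
  (forall c : nat -> R, \sum_(j < k) c j * f j <= p (comb k c)) ->
  forall (c : nat -> R) (a : R),
    \sum_(j < k) c j * f j + a * extension_value k f <= p (comb k c + a *: e k).
Proof.
move=> hf c a; pose phi (d : nat -> R) := \sum_(j < k) d j * f j.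
have phiD d1 d2 : phi (fun j => d1 j + d2 j) = phi d1 + phi d2.
  by rewrite /phi -big_split; apply: eq_bigr => j _; rewrite mulrDl.
have phiZ b d : phi (fun j => b * d j) = b * phi d.
  by rewrite /phi mulr_sumr; apply: eq_bigr => j _; rewrite mulrA.
have lower_upper d1 d2 : phi d1 - p (comb k d1 - e k) <= p (comb k d2 + e k) - phi d2.
  have : phi (fun j => d1 j + d2 j) <= _ := hf _; rewrite phiD combD.
  have := p_subadd (comb k d1 - e k) (comb k d2 + e k); rewrite addrACA addNr addr0; lra.
rewrite /extension_value; set S := [set _ | _ in _].
have S0 : S !=set0 by exists (phi 0 - p (comb k 0 - e k)), 0.
have le_sup d : phi d - p (comb k d - e k) <= sup S.
  apply: ub_le_sup; last by exists d.
  by exists (p (comb k 0 + e k) - phi 0) => _ [d1 _ <-]; apply: lower_upper.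
have sup_le d : sup S <= p (comb k d + e k) - phi d.
  by apply: ge_sup => // _ [d1 _ <-]; apply: lower_upper.
change (phi c + a * sup S <= p (comb k c + a *: e k)).
have [a0|a0|->] := ltrgtP a 0; last by rewrite mul0r scale0r !addr0; apply: hf.
- have := le_sup (fun j => (- a)^-1 * c j); rewrite phiZ combZ.
  have -> : (- a)^-1 *: comb k c - e k = (- a)^-1 *: (comb k c + a *: e k).
    by rewrite scalerDr scalerA invrN mulNr mulVf ?lt_eqF // scaleN1r.
  rewrite sublinear_hom ?invr_gt0 ?oppr_gt0 // -mulrBr.
  rewrite -(ler_pM2l (_ : 0 < - a)) ?oppr_gt0 // mulrA mulfV ?oppr_eq0 ?lt_eqF // mul1r.
  lra.
- have := sup_le (fun j => a^-1 * c j); rewrite phiZ combZ.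
  have -> : a^-1 *: comb k c + e k = a^-1 *: (comb k c + a *: e k).
    by rewrite scalerDr scalerA mulVf ?gt_eqF // scale1r.
  rewrite sublinear_hom ?invr_gt0 // -mulrBr -(ler_pM2l a0) mulrA mulfV ?gt_eqF // mul1r.
  lra.
Qed.

Variable w0 : R.
Hypothesis w0_dominated : forall s, s * w0 <= p (s *: e 0).

Fixpoint extension k : nat -> R :=
  if k is k'.+1 then
    let f := extension k' in fun i => if (i < k)%N then f i else extension_value k f
  else fun=> w0.

Lemma extension_prefix k i : (i <= k)%N -> extension k i = extension i i.
Proof.
elim: k => [|k IH]; first by rewrite leqn0 => /eqP ->.
by rewrite leq_eqVlt => /orP[/eqP -> //|hi]; rewrite /= hi IH.
Qed.

Lemma extension_dominated k (c : nat -> R) :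
  \sum_(i < k.+1) c i * extension k i <= p (comb k.+1 c).
Proof.
elim: k c => [|k IH] c; first by rewrite big_ord1 /comb big_ord1.
rewrite big_ord_recr combS /= ltnn.
have -> : \sum_(i < k.+1) c i * extension k.+1 i = \sum_(i < k.+1) c i * extension k i.
  by apply: eq_bigr => i _; rewrite /= ltn_ord.
exact: extension_value_dominated.
Qed.

Lemma sequential_hahn_banach : exists w : nat -> R, w 0%N = w0 /\
  forall k (c : nat -> R), \sum_(i < k) c i * w i <= p (comb k c).
Proof.
exists (fun i => extension i i); split => // -[|k] c.
  by rewrite big_ord0 /comb big_ord0 sublinear0.
rewrite (eq_bigr (fun i : 'I_k.+1 => c i * extension k i)) ?extension_dominated //.
by move=> i _; rewrite extension_prefix // -ltnS.
Qed.

End Extension.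

Lemma sublinear_dominated_coords (y : nat -> V) (f : V) : exists W : nat -> R,
  (forall N (c : nat -> R), \sum_(i < N) c i * W i <= p (\sum_(i < N) c i *: y i)) /\
  (forall N (c : nat -> R), f = \sum_(i < N) c i *: y i -> p f <= \sum_(i < N) c i * W i).
Proof.
(* Extend along f, y 0, y 1, ..., starting from the value p f at f. *)
pose e k := if k is k'.+1 then y k' else f.
have w0_dominated s : s * p f <= p (s *: e 0%N).
  have [s0|s0|->] := ltrgtP s 0; last by rewrite mul0r scale0r sublinear0.
  - have := p_subadd (s *: f) ((- s) *: f); rewrite -scalerDl subrr scale0r.
    by rewrite sublinear0 (@sublinear_hom (- s)) ?oppr_gt0 //= mulNr; lra.
  - by rewrite sublinear_hom.
have [w [w0 hw]] := sequential_hahn_banach w0_dominated.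
exists (fun i => w i.+1); split => N c.
  have := hw N.+1 (fun k => if k is k'.+1 then c k' else 0).
  by rewrite /comb !big_ord_recl /= mul0r scale0r !add0r.
move=> fE; have := hw N.+1 (fun k => if k is k'.+1 then - c k' else 1).
rewrite /comb !big_ord_recl /= w0 mul1r scale1r.
rewrite (eq_bigr (fun i : 'I_N => - (c i *: y i))); last by move=> i _; rewrite scaleNr.
rewrite (eq_bigr (fun i : 'I_N => - (c i * w i.+1))); last by move=> i _; rewrite mulNr.
by rewrite !sumrN -fE subrr sublinear0; lra.
Qed.

End SequentialHahnBanach.

Lemma big_ord_split_at (Z : zmodType) N0 M (F : nat -> Z) : (N0 <= M)%N ->
  \sum_(i < M) F i = \sum_(i < N0) F i + \sum_(i < M | (N0 <= i)%N) F i.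
Proof.
move=> hM; rewrite (bigID (fun i : 'I_M => (i < N0)%N)) /= -big_ord_widen //.
by congr (_ + _); apply: eq_bigl => i; rewrite -leqNgt.
Qed.

Lemma bounded_series_small_tail (R : realType) (a : nat -> R) (lam th : R) N1 :
  (forall i, 0 <= a i) -> (forall M, \sum_(i < M) a i <= lam) -> 0 < th ->
  exists2 N0, (N1 <= N0)%N & forall M, \sum_(i < M | (N0 <= i)%N) a i <= th.
Proof.
move=> a0 hlam th0; pose S M := \sum_(i < M) a i.
have hS : has_sup (range S).
  by split; [exists (S 0%N), 0%N|exists lam => _ [M _ <-]; apply: hlam].
have [_ [M1 _ <-] hM1] := sup_adherent th0 hS.
exists (maxn M1 N1) => [|M]; first exact: leq_maxr.
have [hM|hM] := leqP (maxn M1 N1) M; last first.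
  rewrite big_pred0 ?ltW // => i; apply/negbTE; rewrite -ltnNge.
  exact: leq_trans (ltn_ord i) (ltnW hM).
have : S M <= sup (range S) by apply: ub_le_sup; [case: hS|exists M].
have := big_ord_split_at a hM; rewrite -/(S M) -/(S (maxn M1 N1)).
have := big_ord_split_at a (leq_maxl M1 N1); rewrite -/(S M1) -/(S (maxn M1 N1)).
have : 0 <= \sum_(i < maxn M1 N1 | (M1 <= i)%N) a i by apply: sumr_ge0.
lra.
Qed.

Section TailApproximation.
Variables (R : realType) (V : lmodType R) (nrm : V -> R).
Hypothesis nrmD : forall u v, nrm (u + v) <= nrm u + nrm v.
Hypothesis nrmZ : forall (a : R) u, nrm (a *: u) = `|a| * nrm u.
Variables (y : nat -> V) (ys : nat -> V -> R).
Hypothesis ys_linear : forall n (a : R) u v, ys n (a *: u + v) = a * ys n u + ys n v.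
Hypothesis ys_biorth : forall n k, ys n (y k) = (n == k)%:R.
Variable alpha : R.
Hypothesis alpha_gt0 : 0 < alpha.
Hypothesis ys_bounded : forall n u, `|ys n u| <= alpha * nrm u.
Hypothesis y_dense : forall v (eta : R), 0 < eta ->
  exists N (c : nat -> R), nrm (v - \sum_(i < N) c i *: y i) < eta.

Definition dual_comb N (w : nat -> R) u := \sum_(i < N) w i * ys i u.

Hypothesis not_norming : forall kappa : R, 0 < kappa -> exists v, nrm v = 1 /\
  forall N w, (forall u, `|dual_comb N w u| <= nrm u) -> `|dual_comb N w v| <= kappa.

Lemma nrm0 : nrm 0 = 0.
Proof. by have := nrmZ 0 0; rewrite scale0r normr0 mul0r. Qed.

Lemma nrmN u : nrm (- u) = nrm u.
Proof. by rewrite -scaleN1r nrmZ normrN1 mul1r. Qed.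

Lemma nrm_ge0 u : 0 <= nrm u.
Proof. by have := nrmD u (- u); rewrite subrr nrm0 nrmN; lra. Qed.

Lemma nrmB u v : nrm (u - v) <= nrm u + nrm v.
Proof. by rewrite -(nrmN v) nrmD. Qed.

Lemma nrm_sum N (F : nat -> V) : nrm (\sum_(i < N) F i) <= \sum_(i < N) nrm (F i).
Proof.
elim: N => [|N IH]; first by rewrite !big_ord0 nrm0.
by rewrite !big_ord_recr /=; apply: le_trans (nrmD _ _) _; rewrite lerD2r.
Qed.

Lemma coordD n u v : ys n (u + v) = ys n u + ys n v.
Proof. by have := ys_linear n 1 u v; rewrite scale1r mul1r. Qed.

Lemma coord0 n : ys n 0 = 0.
Proof. by have := coordD n 0 0; rewrite addr0; lra. Qed.

Lemma coordZ n a u : ys n (a *: u) = a * ys n u.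
Proof. by have := ys_linear n a u 0; rewrite !addr0 coord0 addr0. Qed.

Lemma coordB n u v : ys n (u - v) = ys n u - ys n v.
Proof. by rewrite coordD -scaleN1r coordZ mulN1r. Qed.

Lemma coord_lincomb n N (c : nat -> R) :
  ys n (\sum_(i < N) c i *: y i) = if (n < N)%N then c n else 0.
Proof.
elim: N => [|N IH]; first by rewrite big_ord0 coord0.
rewrite big_ord_recr /= coordD coordZ ys_biorth IH ltnS.
by have [hn|hn|->] := ltngtP n N; rewrite /= ?mulr0n ?mulr1n ?mulr0 ?mulr1 ?addr0 ?add0r.
Qed.

Definition finite_span g := exists N, g = \sum_(i < N) ys i g *: y i.

Lemma coord_finite_span g N : g = \sum_(i < N) ys i g *: y i ->
  forall i, (N <= i)%N -> ys i g = 0.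
Proof. by move=> gE i hi; rewrite {1}gE (coord_lincomb _ _ (ys^~ g)) ltnNge hi. Qed.

Lemma finite_span_widen g N M : (N <= M)%N ->
  g = \sum_(i < N) ys i g *: y i -> g = \sum_(i < M) ys i g *: y i.
Proof.
move=> hNM gE; rewrite {1}gE.
apply: (big_ord_suffix0 (F := fun i => ys i g *: y i)) => // i hi.
by rewrite (coord_finite_span gE hi) scale0r.
Qed.

Lemma finite_span_comb N (c : nat -> R) : finite_span (\sum_(i < N) c i *: y i).
Proof. by exists N; apply: eq_bigr => i _; rewrite coord_lincomb ltn_ord. Qed.

Lemma finite_spanD g h : finite_span g -> finite_span h -> finite_span (g + h).
Proof.
move=> [N gE] [M hE]; exists (maxn N M).
rewrite {1}(finite_span_widen (leq_maxl N M) gE) {1}(finite_span_widen (leq_maxr N M) hE).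
by rewrite -big_split; apply: eq_bigr => i _; rewrite coordD scalerDl.
Qed.

Lemma finite_spanZ a g : finite_span g -> finite_span (a *: g).
Proof.
move=> [N gE]; exists N; rewrite {1}gE scaler_sumr.
by apply: eq_bigr => i _; rewrite coordZ scalerA.
Qed.

Definition tail_comb n t g :=
  [/\ finite_span g, forall i, (i <= n)%N -> ys i g = 0 & forall i, `|ys i g| <= t].

Lemma tail_comb0 n : tail_comb n 0 0.
Proof. by split=> [|i _|i]; rewrite ?coord0 ?normr0 //; exists 0%N; rewrite big_ord0. Qed.

Lemma tail_comb_ge0 n t g : tail_comb n t g -> 0 <= t.
Proof. by case=> _ _ /(_ 0%N); apply: le_trans. Qed.

Lemma tail_combD n t1 t2 g1 g2 :
  tail_comb n t1 g1 -> tail_comb n t2 g2 -> tail_comb n (t1 + t2) (g1 + g2).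
Proof.
case=> s1 h1 b1 [s2 h2 b2]; split=> [|i hi|i]; rewrite ?coordD.
- exact: finite_spanD.
- by rewrite h1 ?h2 ?addr0.
- by apply: le_trans (ler_normD _ _) _; apply: lerD.
Qed.

Lemma tail_combZ n t g (a : R) : tail_comb n t g -> tail_comb n (`|a| * t) (a *: g).
Proof.
case=> s h b; split=> [|i hi|i]; rewrite ?coordZ.
- exact: finite_spanZ.
- by rewrite h ?mulr0.
- by rewrite normrM ler_wpM2l.
Qed.

Lemma dual_combD N w u v : dual_comb N w (u + v) = dual_comb N w u + dual_comb N w v.
Proof. by rewrite /dual_comb -big_split; apply: eq_bigr => i _; rewrite coordD mulrDr. Qed.

Lemma dual_combZ N w a u : dual_comb N w (a *: u) = a * dual_comb N w u.
Proof. by rewrite /dual_comb mulr_sumr; apply: eq_bigr => i _; rewrite coordZ mulrCA. Qed.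

Lemma dual_comb_delta i u : dual_comb i.+1 (fun j => (j == i)%:R) u = ys i u.
Proof.
rewrite /dual_comb big_ord_recr /= eqxx mul1r big1 ?add0r // => j _.
by rewrite ltn_eqF //= mulr0n mul0r.
Qed.

Lemma dual_comb_bounded N w u :
  `|dual_comb N w u| <= alpha * (\sum_(i < N) `|w i|) * nrm u.
Proof.
rewrite mulrAC mulrC mulr_suml; apply: le_trans (ler_norm_sum _ _ _) _.
by apply: ler_sum => i _; rewrite normrM ler_wpM2l.
Qed.

Lemma dual_comb_le_dense N w (B : R) : 0 <= B ->
  (forall z, finite_span z -> `|dual_comb N w z| <= B * nrm z) ->
  forall u, `|dual_comb N w u| <= B * nrm u.
Proof.
move=> B0 hz u; set C := alpha * \sum_(i < N) `|w i|.
have C0 : 0 <= C by rewrite mulr_ge0 ?sumr_ge0 // ltW.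
apply: (@ler_addgt0_scaled _ _ _ (B + C)); first by rewrite addr_ge0.
move=> eta eta0; have [M [c uz]] := y_dense u eta0.
set z := \sum_(i < M) c i *: y i in uz.
have := hz z (finite_span_comb M c); have := dual_comb_bounded N w (u - z).
have := nrmB u (u - z); rewrite opprB addrC subrK => nz.
have -> : dual_comb N w u = dual_comb N w (u - z) + dual_comb N w z.
  by rewrite -dual_combD subrK.
rewrite -/C => h1 h2.
apply: le_trans (ler_normD _ _) _.
have : B * nrm z <= B * (nrm u + eta) by rewrite ler_wpM2l // (le_trans nz) // lerD2l ltW.
have : C * nrm (u - z) <= C * eta by rewrite ler_wpM2l // ltW.
lra.
Qed.

Definition almost_annihilated kappa f := forall N w B, 0 < B ->
  (forall u, `|dual_comb N w u| <= B * nrm u) -> `|dual_comb N w f| <= B * kappa.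

Lemma almost_annihilated_coord kappa f i :
  almost_annihilated kappa f -> `|ys i f| <= alpha * kappa.
Proof. by move=> af; rewrite -dual_comb_delta af // => u; rewrite dual_comb_delta. Qed.

Lemma almost_annihilated_le kappa kappa' f : kappa <= kappa' ->
  almost_annihilated kappa f -> almost_annihilated kappa' f.
Proof. by move=> hk af N w B B0 hB; apply: le_trans (af N w B B0 hB) _; rewrite ler_pM2l. Qed.

Lemma almost_annihilated_scale kappa f (s : R) : 0 <= s ->
  almost_annihilated kappa f -> almost_annihilated (s * kappa) (s *: f).
Proof.
move=> s0 af N w B B0 hB; rewrite dual_combZ normrM ger0_norm // mulrCA.
by rewrite ler_wpM2l // af.
Qed.

Lemma almost_annihilated_near kappa d v f : almost_annihilated kappa v ->
  nrm (f - v) <= d -> almost_annihilated (kappa + d) f.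
Proof.
move=> av fv N w B B0 hB; rewrite -(subrK v f) dual_combD mulrDr.
apply: le_trans (ler_normD _ _) _; rewrite addrC lerD ?av //.
by apply: le_trans (hB _) _; rewrite ler_pM2l.
Qed.

Lemma almost_annihilated_unit kappa : 0 < kappa ->
  exists v, nrm v = 1 /\ almost_annihilated kappa v.
Proof.
move=> k0; have [v [v1 hv]] := not_norming k0; exists v; split=> // N w B B0 hB.
have dual_combV u : dual_comb N (fun i => B^-1 * w i) u = B^-1 * dual_comb N w u.
  by rewrite /dual_comb mulr_sumr; apply: eq_bigr => i _; rewrite mulrA.
have Bi0 : 0 <= B^-1 by rewrite invr_ge0 ltW.
have := hv N (fun i => B^-1 * w i); rewrite dual_combV normrM ger0_norm // ler_pdivrMl //.
by apply=> u; rewrite dual_combV normrM ger0_norm // ler_pdivrMl.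
Qed.

Lemma nrm_lincomb_le N (c : nat -> R) b : (forall i, `|c i| <= b) ->
  nrm (\sum_(i < N) c i *: y i) <= b * \sum_(i < N) nrm (y i).
Proof.
move=> hc; apply: le_trans (nrm_sum _ (fun i => c i *: y i)) _.
by rewrite mulr_sumr; apply: ler_sum => i _; rewrite nrmZ ler_wpM2r ?nrm_ge0.
Qed.

(* Approximate a unit vector that is almost annihilated by a finite combination,
   and remove its coordinates of index at most m. *)
Lemma exists_almost_annihilated_half kappa m : 0 < kappa ->
  exists f, [/\ finite_span f, forall i, (i <= m)%N -> ys i f = 0,
    1 / 2 <= nrm f & almost_annihilated kappa f].
Proof.
move=> k0; set S := \sum_(i < m.+1) nrm (y i).
have S0 : 0 <= S by apply: sumr_ge0 => i _; apply: nrm_ge0.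
have C0 : 0 < 2 * (1 + 2 * alpha * S).
  by rewrite mulr_gt0 // ltr_pwDl // mulr_ge0 // mulr_ge0 // ltW.
set eta := Num.min 1 kappa / (2 * (1 + 2 * alpha * S)).
have eta0 : 0 < eta by rewrite divr_gt0 // lt_min ltr01.
have etaC : eta * (2 * (1 + 2 * alpha * S)) = Num.min 1 kappa by rewrite divfK ?gt_eqF.
have [min1 mink] : Num.min 1 kappa <= 1 /\ Num.min 1 kappa <= kappa.
  by split; rewrite ge_min lexx ?orbT.
have [v [v1 av]] := almost_annihilated_unit eta0.
have [N [c vz]] := y_dense v eta0; set z := \sum_(i < N) c i *: y i in vz.
have coord_z i : `|ys i z| <= 2 * alpha * eta.
  have -> : ys i z = ys i v - ys i (v - z) by rewrite coordB opprB addrC subrK.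
  apply: le_trans (ler_normB _ _) _.
  have := almost_annihilated_coord i av; have := ys_bounded i (v - z).
  have : alpha * nrm (v - z) <= alpha * eta by rewrite ler_pM2l // ltW.
  lra.
set h := \sum_(i < m.+1) ys i z *: y i.
have nh : nrm h <= 2 * alpha * eta * S := nrm_lincomb_le _ coord_z.
set f := z - h.
have fv : nrm (f - v) <= eta * (1 + 2 * alpha * S).
  have -> : f - v = - (v - z) - h by rewrite /f addrAC opprB.
  by apply: le_trans (nrmB _ _) _; rewrite nrmN; have := ltW vz; lra.
have aeS : 0 <= alpha * eta * S by rewrite mulr_ge0 // mulr_ge0 // ltW.
exists f; split.
- apply: finite_spanD; first exact: finite_span_comb.
  by rewrite -scaleN1r; apply/finite_spanZ/(finite_span_comb _ (ys^~ z)).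
- by move=> i hi; rewrite coordB (coord_lincomb _ _ (ys^~ z)) ltnS hi subrr.
- have := nrmD f (v - f); rewrite addrC subrK v1 -[nrm (v - f)]nrmN opprB; lra.
apply: almost_annihilated_le (almost_annihilated_near av fv); lra.
Qed.

Lemma exists_almost_annihilated_tail kappa r m : 0 < kappa -> 0 < r ->
  exists f, [/\ finite_span f, forall i, (i <= m)%N -> ys i f = 0,
    nrm f = r & almost_annihilated kappa f].
Proof.
move=> k0 r0; have r2 : 0 < 2 * r by rewrite mulr_gt0.
have [f [fs fh nf af]] := exists_almost_annihilated_half m (divr_gt0 k0 r2).
have nf0 : 0 < nrm f by apply: lt_le_trans nf; rewrite divr_gt0.
set s := r / nrm f; have s0 : 0 <= s by rewrite divr_ge0 ?ltW.
have s2 : s <= 2 * r by rewrite ler_pdivrMr //; nra.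
exists (s *: f); split.
- exact: finite_spanZ.
- by move=> i hi; rewrite coordZ fh ?mulr0.
- by rewrite nrmZ ger0_norm // divfK // gt_eqF.
apply: almost_annihilated_le (almost_annihilated_scale s0 af).
apply: le_trans (ler_wpM2r _ s2) _; first by rewrite divr_ge0 ?ltW.
by rewrite mulrC divfK ?gt_eqF.
Qed.

Definition dominated (q : V -> R) (W : nat -> R) :=
  forall N (c : nat -> R), \sum_(i < N) c i * W i <= q (\sum_(i < N) c i *: y i).

Section TailDistance.
Variables (n : nat) (lam : R).
Hypothesis lam_ge0 : 0 <= lam.

Definition tail_costs u :=
  [set x | exists g t, tail_comb n t g /\ x = nrm (u + g) + lam * t].

Definition tail_dist u := inf (tail_costs u).

Lemma tail_costs_has_inf u : has_inf (tail_costs u).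
Proof.
split; first by exists (nrm (u + 0) + lam * 0), 0, 0; split=> //; apply: tail_comb0.
exists 0 => _ [g [t [gt ->]]]; rewrite addr_ge0 ?nrm_ge0 // mulr_ge0 //.
exact: tail_comb_ge0 gt.
Qed.

Lemma tail_dist_le u g t : tail_comb n t g -> tail_dist u <= nrm (u + g) + lam * t.
Proof. by move=> gt; apply: ge_inf; [case: (tail_costs_has_inf u)|exists g, t]. Qed.

Lemma tail_dist_ge u b : (forall g t, tail_comb n t g -> b <= nrm (u + g) + lam * t) ->
  b <= tail_dist u.
Proof.
move=> hb; apply: lb_le_inf; first by case: (tail_costs_has_inf u).
by move=> _ [g [t [gt ->]]]; apply: hb.
Qed.

Lemma tail_dist_le_nrm u : tail_dist u <= nrm u.
Proof. by have := tail_dist_le u (tail_comb0 n); rewrite addr0 mulr0 addr0. Qed.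

Lemma tail_dist_tail g t : tail_comb n t g -> tail_dist g <= lam * t.
Proof.
move=> gt; have := tail_dist_le g (tail_combZ (-1) gt).
by rewrite scaleN1r subrr nrm0 add0r normrN1 mul1r.
Qed.

Lemma tail_dist_subadd u v : tail_dist (u + v) <= tail_dist u + tail_dist v.
Proof.
apply/ler_addgt0Pr => e e0; have e2 : 0 < e / 2 by rewrite divr_gt0.
have [_ [g1 [t1 [gt1 ->]]] hu] := inf_adherent e2 (tail_costs_has_inf u).
have [_ [g2 [t2 [gt2 ->]]] hv] := inf_adherent e2 (tail_costs_has_inf v).
have := tail_dist_le (u + v) (tail_combD gt1 gt2).
have : nrm (u + v + (g1 + g2)) <= nrm (u + g1) + nrm (v + g2) by rewrite addrACA nrmD.
rewrite -/(tail_dist u) -/(tail_dist v) in hu hv; lra.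
Qed.

Lemma tail_dist_subhom (s : R) u : 0 < s -> tail_dist (s *: u) <= s * tail_dist u.
Proof.
move=> s0; rewrite -ler_pdivrMl //; apply: tail_dist_ge => g t gt.
rewrite ler_pdivrMl //; apply: le_trans (tail_dist_le _ (tail_combZ s gt)) _.
by rewrite -scalerDr nrmZ gtr0_norm // mulrCA -mulrDr.
Qed.

End TailDistance.

Lemma dominated_tail_sum n lam (W : nat -> R) : 0 <= lam ->
  dominated (tail_dist n lam) W ->
  forall M, \sum_(i < M | (n < i)%N) `|W i| <= lam.
Proof.
move=> lam0 hW M; pose c i := if (n < i)%N then Num.sg (W i) else 0.
have gt : tail_comb n 1 (\sum_(i < M) c i *: y i).
  split=> [|i hi|i]; rewrite ?(coord_lincomb _ _ c); first exact: finite_span_comb.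
    by case: ifP => // _; rewrite /c ltnNge hi.
  case: ifP => _; rewrite ?normr0 // /c; case: ifP => _; rewrite ?normr0 //.
  by rewrite normr_sg; case: (_ != 0).
have := le_trans (hW M c) (tail_dist_tail lam0 gt); rewrite mulr1.
apply: le_trans; rewrite big_mkcond /= (eq_bigr (fun i : 'I_M => c i * W i)) // => i _.
by rewrite /c; case: ltnP => _ /=; rewrite ?mul0r // -normrEsg.
Qed.

Lemma dominated_truncation n lam th (W : nat -> R) N0 :
  0 <= lam -> 0 <= th -> (n < N0)%N ->
  dominated (tail_dist n lam) W ->
  (forall M, \sum_(i < M | (N0 <= i)%N) `|W i| <= th) ->
  forall u, `|dual_comb N0 W u| <= (1 + alpha * th) * nrm u.
Proof.
move=> lam0 th0 hN0 hW tail; apply: dual_comb_le_dense.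
  by rewrite addr_ge0 // mulr_ge0 // ltW.
move=> z [N zE]; set M := maxn N N0; have {}zE := finite_span_widen (leq_maxl N N0) zE.
have dom (c : nat -> R) : \sum_(i < M) c i * W i <= nrm (\sum_(i < M) c i *: y i).
  by apply: le_trans (hW M c) _; apply: tail_dist_le_nrm.
have full : `|\sum_(i < M) ys i z * W i| <= nrm z.
  rewrite ler_norml -lerNl; apply/andP; split; last by rewrite {2}zE; exact: (dom (ys^~ z)).
  have := dom (fun i => - ys i z).
  rewrite (eq_bigr (fun i : 'I_M => - (ys i z *: y i))) => [|i _]; last by rewrite scaleNr.
  rewrite (eq_bigr (fun i : 'I_M => - (ys i z * W i))) => [|i _]; last by rewrite mulNr.
  by rewrite !sumrN -zE nrmN.
have tail_z : `|\sum_(i < M | (N0 <= i)%N) ys i z * W i| <= alpha * th * nrm z.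
  apply: le_trans (_ : _ <= alpha * nrm z * \sum_(i < M | (N0 <= i)%N) `|W i|) _.
    rewrite mulr_sumr; apply: le_trans (ler_norm_sum _ _ _) _; apply: ler_sum => i _.
    by rewrite normrM ler_wpM2r.
  rewrite [X in _ <= X]mulrAC; apply: ler_wpM2l; last exact: tail.
  by rewrite mulr_ge0 ?nrm_ge0 // ltW.
have : dual_comb N0 W z = \sum_(i < M) ys i z * W i - \sum_(i < M | (N0 <= i)%N) ys i z * W i.
  rewrite (big_ord_split_at (fun i => ys i z * W i) (leq_maxr N N0)) addrK.
  by apply: eq_bigr => i _; rewrite mulrC.
move=> ->; apply: le_trans (ler_normB _ _) _; lra.
Qed.

Lemma tail_dist_far (eps delta : R) f n : 0 < eps -> 0 < delta ->
  (forall g, tail_comb n delta g -> eps <= nrm (f + g)) ->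
  eps <= tail_dist n (eps / delta) f.
Proof.
move=> e0 d0 far; have lam0 : 0 < eps / delta by rewrite divr_gt0.
apply: (tail_dist_ge (ltW lam0)) => g t gt; have t0 := tail_comb_ge0 gt.
have [tle|tgt] := lerP t delta.
  have : eps <= nrm (f + g).
    by apply: far; case: gt => gs gh gb; split=> // i; apply: le_trans (gb i) tle.
  have : 0 <= eps / delta * t by apply: mulr_ge0 => //; apply: ltW.
  lra.
have : eps / delta * delta <= eps / delta * t by rewrite ler_pM2l // ltW.
rewrite divfK ?gt_eqF //; have := nrm_ge0 (f + g); lra.
Qed.

Lemma tail_correction (kappa eps delta : R) f n : 0 < kappa -> kappa < eps -> 0 < delta ->
  finite_span f -> almost_annihilated kappa f ->
  exists g, tail_comb n delta g /\ nrm (f + g) < eps.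
Proof.
move=> k0 keps d0 [Nf fE] af; apply: contrapT => far.
have e0 : 0 < eps := lt_trans k0 keps.
set lam := eps / delta; have lam0 : 0 < lam by rewrite divr_gt0.
have q_f : eps <= tail_dist n lam f.
  apply: tail_dist_far => // g gt; rewrite leNgt; apply/negP => fg.
  by apply: far; exists g.
have [W [hW hWf]] := sublinear_dominated_coords
  (@tail_dist_subadd n lam (ltW lam0)) (@tail_dist_subhom n lam (ltW lam0)) y f.
have Wf : eps <= \sum_(i < Nf) ys i f * W i := le_trans q_f (hWf _ (ys^~ f) fE).
(* th is chosen so that (1 + alpha * th) * kappa < eps. *)
set th := (eps - kappa) / (2 * alpha * kappa).
have th0 : 0 < th by rewrite divr_gt0 ?subr_gt0 // !mulr_gt0.
pose a i := if (n < i)%N then `|W i| else 0.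
have a_ge0 i : 0 <= a i by rewrite /a; case: ifP.
have a_sum M : \sum_(i < M) a i <= lam.
  by rewrite /a -big_mkcond /=; apply: (dominated_tail_sum (ltW lam0) hW).
have [N0 hN0 tail] := bounded_series_small_tail (maxn n.+1 Nf) a_ge0 a_sum th0.
have nN0 : (n < N0)%N := leq_trans (leq_maxl _ _) hN0.
have NfN0 : (Nf <= N0)%N := leq_trans (leq_maxr _ _) hN0.
have tailW M : \sum_(i < M | (N0 <= i)%N) `|W i| <= th.
  by rewrite (eq_bigr (fun i : 'I_M => a i)) ?tail // => i hi; rewrite /a (leq_trans nN0 hi).
have bound := dominated_truncation (ltW lam0) (ltW th0) nN0 hW tailW.
have B0 : 0 < 1 + alpha * th by rewrite addr_gt0 // mulr_gt0.
have := af N0 W _ B0 bound.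
have -> : dual_comb N0 W f = \sum_(i < Nf) ys i f * W i.
  rewrite /dual_comb -(@big_ord_suffix0 _ Nf N0 (fun i => W i * ys i f)) //.
    by apply: eq_bigr => i _; rewrite mulrC.
  by move=> i hi; rewrite (coord_finite_span fE hi) mulr0.
have hth : alpha * th * kappa = (eps - kappa) / 2.
  by rewrite /th; field; rewrite !gt_eqF.
have := ler_norm (\sum_(i < Nf) ys i f * W i); lra.
Qed.

Theorem tail_approximation (eps r : R) m : 0 < eps -> 0 < r ->
  exists f, [/\ tail_comb m (eps / 2) f, nrm f = r &
    forall n (delta : R), 0 < delta -> exists g, tail_comb n delta g /\ nrm (f + g) < eps].
Proof.
move=> e0 r0; set kappa := Num.min (eps / (2 * alpha)) (eps / 2).
have k0 : 0 < kappa by rewrite lt_min !divr_gt0 // mulr_gt0.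
have k1 : kappa * (2 * alpha) <= eps by rewrite -ler_pdivlMr ?mulr_gt0 // ge_min lexx.
have k2 : kappa <= eps / 2 by rewrite ge_min lexx orbT.
have [f [fspan fhead nf af]] := exists_almost_annihilated_tail m k0 r0.
exists f; split=> // [|n delta d0].
  split=> // i; apply: le_trans (almost_annihilated_coord i af) _; lra.
by apply: tail_correction k0 _ d0 fspan af; lra.
Qed.

End TailApproximation.

Section DualSystems.
Context {K : numFieldType} {X : normedModType K}.
Implicit Types (g : X -> K) (xs : nat -> X -> K).

Lemma dual_elemD g : dual_elem g -> forall u v, g (u + v) = g u + g v.
Proof. by case=> hg _ u v; have := hg 1 u v; rewrite scale1r mul1r. Qed.

Lemma dual_elem0 g : dual_elem g -> g 0 = 0.
Proof. by move=> hg; apply: (addrI (g 0)); rewrite -dual_elemD // !addr0. Qed.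

Lemma dual_elemZ g : dual_elem g -> forall a u, g (a *: u) = a * g u.
Proof.
by move=> hg a u; case: (hg) => lin _; rewrite -[a *: u]addr0 lin dual_elem0 // addr0.
Qed.

Lemma dual_elem_comb xs N (w : nat -> K) : (forall n, dual_elem (xs n)) ->
  dual_elem (fun u => \sum_(i < N) w i * xs i u).
Proof.
move=> hxs; split.
  move=> a u v; rewrite mulr_sumr -big_split; apply: eq_bigr => i _.
  by case: (hxs i) => -> _; rewrite mulrDr mulrCA.
elim: N => [|N IH] u.
  have -> : (fun u => \sum_(i < 0) w i * xs i u) = fun=> 0.
    by apply/funext => v; rewrite big_ord0.
  exact: cst_continuous.
have -> : (fun u => \sum_(i < N.+1) w i * xs i u) =
    (fun u => \sum_(i < N) w i * xs i u) + (fun u => w N * xs N u).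
  by apply/funext => v; rewrite big_ord_recr.
apply: continuousD; first exact: IH.
have [_ xsN] := hxs N.
exact: (continuousM (@cst_continuous _ _ (w N) u) (xsN u)).
Qed.

Lemma dual_elem_bounded g : dual_elem g -> exists2 B : K, 0 < B & forall u, `|g u| <= B * `|u|.
Proof.
move=> hg; have g0 := dual_elem0 hg; case: (hg) => _ hc.
have := @cvgr_dist_lt _ _ _ _ _ g (g 0) (hc 0) 1 ltr01; rewrite g0 => near0.
have /nbhs_norm0P [e /= e0 he] := near0 (nbhs_filter _).
exists (2 / e) => [|u]; first by rewrite divr_gt0.
have [->|u0] := eqVneq u 0; first by rewrite g0 !normr0 mulr0.
have nu : 0 < `|u| by rewrite normr_gt0.
set a := e / (2 * `|u|); have a0 : 0 < a by rewrite divr_gt0 // mulr_gt0.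
have : `|a *: u| < e.
  rewrite normrZ gtr0_norm // (_ : a * `|u| = e / 2).
    by rewrite ltr_pdivrMr // ltr_pMr // ltr1n.
  by rewrite /a; field; rewrite gt_eqF.
move=> /he; rewrite sub0r normrN dual_elemZ // normrM gtr0_norm // => h.
rewrite -(ler_pM2l a0); apply: ltW; apply: lt_le_trans h _.
suff -> : a * (2 / e * `|u|) = 1 by [].
by rewrite /a; field; rewrite ?gt_eqF.
Qed.

Lemma dual_norm_le g s : dual_elem g -> dual_norm g s -> forall u, `|g u| <= s * `|u|.
Proof.
move=> hg [ub _] u; have [->|u0] := eqVneq u 0; first by rewrite dual_elem0 // !normr0 mulr0.
have nu : 0 < `|u| by rewrite normr_gt0.
have := ub `|g (`|u|^-1 *: u)|; rewrite dual_elemZ // normrM normfV normr_id.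
rewrite ler_pdivrMl // [_ * s]mulrC; apply; exists (`|u|^-1 *: u).
  by rewrite /= normrZ normfV normr_id mulVf ?gt_eqF.
by rewrite dual_elemZ // normrM normfV normr_id.
Qed.

Lemma dual_norm_scale g s : dual_norm g s -> 0 < s -> dual_norm (fun u => s^-1 * g u) 1.
Proof.
move=> [ub approx] s0; split.
  move=> _ [u hu <-]; rewrite normrM gtr0_norm ?invr_gt0 // ler_pdivrMl // mulr1.
  by apply: ub; exists u.
move=> t ht; have ts : t * s < s by rewrite -ltr_pdivlMr // mulfV ?gt_eqF.
have [_ [u hu <-] hgu] := approx _ ts.
exists (s^-1 * `|g u|); first by exists u => //; rewrite normrM gtr0_norm // invr_gt0.
by rewrite ltr_pdivlMl // mulrC.
Qed.

Lemma biorth_neq0 (x : nat -> X) xs n : dual_elem (xs n) ->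
  (forall k, xs n (x k) = (n == k)%:R) -> x n != 0.
Proof.
move=> hg hb; apply/eqP => xn0; have := hb n.
by rewrite xn0 dual_elem0 // eqxx => /esym/eqP; rewrite oner_eq0.
Qed.

Lemma closure_span_approx (x : nat -> X) : closure (span_seq x) = setT ->
  forall v (eta : K), 0 < eta -> exists N (c : nat -> K), `|v - \sum_(i < N) c i *: x i| < eta.
Proof.
move=> hcl v eta eta0; have : closure (span_seq x) v by rewrite hcl.
move=> /(_ (ball v eta) (nbhsx_ballx _ _ eta0)) [w [[N [c ->]] hb]].
by exists N, c; move: hb; rewrite -ball_normE.
Qed.

Lemma dual_span_normalize xs N (w : nat -> K) s kappa v :
  dual_norm (fun u => \sum_(i < N) w i * xs i u) s ->
  (forall u, `|\sum_(i < N) w i * xs i u| <= `|u|) -> `|v| = 1 ->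
  0 <= kappa -> kappa < `|\sum_(i < N) w i * xs i v| ->
  exists g, [/\ dual_span xs g, dual_norm g 1 & kappa < `|g v|].
Proof.
move=> hs bnd v1 k0 kv; set g := fun u => _ in hs; case: (hs) => ub approx.
have gv_s : `|g v| <= s by apply: ub; exists v; rewrite //= v1.
have s0 : 0 < s by apply: lt_le_trans gv_s; apply: le_lt_trans kv.
have s1 : s <= 1.
  rewrite real_leNgt ?ger0_real ?ltW //; apply/negP => /approx [_ [u hu <-]].
  by apply/negP; rewrite -real_leNgt ?ger0_real // (le_trans (bnd u)).
exists (fun u => s^-1 * g u); split.
- exists N, (fun i => s^-1 * w i); apply/funext => u.
  by rewrite /g mulr_sumr; apply: eq_bigr => i _; rewrite mulrA.
- exact: dual_norm_scale.
- rewrite normrM gtr0_norm ?invr_gt0 //; apply: lt_le_trans kv _.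
  by rewrite ler_peMl // invf_ge1.
Qed.

Lemma dual_span_norming xs (kappa : K) (v0 : X) : (forall n, dual_elem (xs n)) ->
  0 < kappa <= 1 -> v0 != 0 ->
  (forall v, `|v| = 1 -> exists g, [/\ dual_span xs g, dual_norm g 1 & kappa < `|g v|]) ->
  norming (dual_span xs).
Proof.
move=> hxs kappa01 v00 hv; exists kappa => // f t ht.
have [k0 _] := andP kappa01.
have unit (u : X) : u != 0 -> `|(`|u|^-1 *: u)| = 1.
  by move=> u0; rewrite normrZ normfV normr_id mulVf ?normr_eq0.
have [f0|f0] := eqVneq f 0.
  have [g [gs gn _]] := hv _ (unit _ v00); exists g; split=> //.
  by apply: lt_le_trans ht _; rewrite f0 normr0 mulr0.
have [g [gs gn gf]] := hv _ (unit _ f0); exists g; split=> //.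
have gZ a u : g (a *: u) = a * g u.
  by have [N [w ->]] := gs; apply: (dual_elemZ (dual_elem_comb N w hxs)).
move: gf; rewrite gZ normrM normfV normr_id ltr_pdivlMl ?normr_gt0 // => gf.
by apply: lt_trans ht _; rewrite mulrC.
Qed.

End DualSystems.

Lemma dual_norm_exists_real (R : realType) (X : normedModType R) (g : X -> R) :
  dual_elem g -> exists s, dual_norm g s.
Proof.
move=> hg; have [B B0 hB] := dual_elem_bounded hg.
set S := [set `|g u| | u in [set u : X | `|u| <= 1]].
have S0 : S !=set0 by exists `|g 0|, 0 => //=; rewrite normr0.
have SB : ubound S B.
  by move=> _ [u /= hu <-]; apply: le_trans (hB u) _; rewrite -[X in _ <= X]mulr1 ler_pM2l.
exists (sup S); split=> [t St|t]; first by apply: ub_le_sup => //; exists B.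
exact: sup_gt.
Qed.

Section RealSystem.
Variables (R : realType) (X : normedModType R) (x : nat -> X) (xs : nat -> X -> R).
Hypothesis xs_dual : forall n, dual_elem (xs n).
Hypothesis xs_biorth : forall n k, xs n (x k) = (n == k)%:R.

Lemma real_almost_annihilated_unit : ~ norming (dual_span xs) ->
  forall kappa, 0 < kappa -> exists v : X, `|v| = 1 /\
    forall N w, (forall u, `|dual_comb xs N w u| <= `|u|) -> `|dual_comb xs N w v| <= kappa.
Proof.
move=> hnn k k0; apply: contrapT => hneg; apply: hnn.
have k1 : 0 <= Num.min k 1 <= k by rewrite le_min ltW //= ler01 ge_min lexx.
apply: (@dual_span_norming _ _ xs (Num.min k 1) (x 0%N)) => //.
- by rewrite lt_min k0 ltr01 ge_min lexx orbT.
- exact: biorth_neq0.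
move=> v v1; have [N [w [wb wv]]] : exists N w,
    (forall u, `|dual_comb xs N w u| <= `|u|) /\ k < `|dual_comb xs N w v|.
  apply: contrapT => h; apply: hneg; exists v; split=> // N w wb.
  by rewrite leNgt; apply/negP => wv; apply: h; exists N, w.
have [s hs] := dual_norm_exists_real (dual_elem_comb N w xs_dual).
have [k10 k1k] := andP k1.
exact: dual_span_normalize hs wb v1 k10 (le_lt_trans k1k wv).
Qed.

Lemma real_tail_comb_span n t g : tail_comb x xs n t g -> span_gt x n g.
Proof.
case=> [[N gE] head _]; exists N, (xs^~ g); rewrite {1}gE.
by apply: big_ord_prefix0 => i hi; rewrite head // scale0r.
Qed.

Lemma real_tail_comb_supnorm n e g :
  0 < e -> tail_comb x xs n (e / 2) g -> supnorm_lt xs g e.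
Proof. by move=> e0 [_ _ b]; exists (e / 2) => //; lra. Qed.

End RealSystem.

Theorem real_case (R : realType) (X : completeNormedModType R) : lemma3p7_for X.
Proof.
move=> x xs [hcl [hdual hbio]] [a2 ha2] hnn eps r m e0 r0.
set alpha := Num.max a2 1.
have alpha0 : 0 < alpha by rewrite lt_max ltr01 orbT.
have xs_bounded n u : `|xs n u| <= alpha * `|u|.
  have [s hs] := dual_norm_exists_real (hdual n).
  apply: le_trans (dual_norm_le (hdual n) hs u) _; apply: ler_wpM2r => //.
  by apply: le_trans (ha2 n s hs) _; rewrite le_max lexx.
have [f [ft nf hg]] := tail_approximation (@ler_normD _ X) (@normrZ _ X)
  (fun n => (hdual n).1) hbio alpha0 xs_bounded (closure_span_approx hcl)
  (real_almost_annihilated_unit hdual hbio hnn) m e0 r0.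
exists f; split=> //.
- exact: real_tail_comb_span ft.
- exact: real_tail_comb_supnorm e0 ft.
move=> n _ delta d0; have [g [gt fg]] := hg n (delta / 2) (divr_gt0 d0 (ltr0Sn _ 1)).
by exists g; split=> //; [apply: real_tail_comb_span gt|apply: real_tail_comb_supnorm d0 gt].
Qed.

Section ComplexNumbers.
Variable R : realType.
Implicit Types (z w : R[i]) (a b : R).

Lemma ReD z w : Re (z + w) = Re z + Re w.
Proof. by case: z; case: w. Qed.

Lemma ImD z w : Im (z + w) = Im z + Im w.
Proof. by case: z; case: w. Qed.

Lemma Re_sum N (F : nat -> R[i]) : Re (\sum_(i < N) F i) = \sum_(i < N) Re (F i).
Proof. by elim: N => [|N IH]; rewrite ?big_ord0 // !big_ord_recr ReD IH. Qed.

Lemma Re_realM a z : Re (a%:C * z) = a * Re z.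
Proof. by case: z => p q; simpc. Qed.

Lemma Im_realM a z : Im (a%:C * z) = a * Im z.
Proof. by case: z => p q; simpc. Qed.

Lemma Re_conj_pairM a b z : Re ((a%:C - 'i * b%:C) * z) = a * Re z + b * Im z.
Proof. by case: z => p q; simpc; rewrite /=; lra. Qed.

Lemma ge0_complexE z : 0 <= z -> z = (Re z)%:C.
Proof. by move=> z0; have := ger0_Im z0; case: z z0 => p q /= _ ->. Qed.

Lemma gt0_complexP z : 0 < z -> exists2 a, 0 < a & z = a%:C.
Proof.
move=> z0; exists (Re z); last exact/ge0_complexE/ltW.
by move: z0; rewrite ltcE => /andP[].
Qed.

Lemma normcE (T : normedModType R[i]) (v : T) : `|v| = (Re `|v|)%:C.
Proof. exact/ge0_complexE/normr_ge0. Qed.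

Lemma normc_real a : `|a%:C| = `|a|%:C.
Proof. by rewrite normc_def /= expr0n addr0 sqrtr_sqr. Qed.

Lemma normc_i : `|'i| = 1 :> R[i].
Proof. by rewrite normc_def /= expr0n add0r expr1n sqrtr1. Qed.

Lemma Re_le_normc z : `|Re z| <= Re `|z|.
Proof.
by have := normc_ge_Re z; rewrite [X in _ <= X](ge0_complexE (normr_ge0 z)) lecR.
Qed.

Lemma Im_le_normc z : `|Im z| <= Re `|z|.
Proof. by have := Re_le_normc (z * 'i); rewrite ReiNIm normrN normrM normc_i mulr1. Qed.

End ComplexNumbers.

Lemma dual_norm_exists_complex (R : realType) (X : normedModType R[i]) (g : X -> R[i]) :
  dual_elem g -> exists s : R, dual_norm g s%:C.
Proof.
move=> hg; have [B B0 hB] := dual_elem_bounded hg; have [b b0 BE] := gt0_complexP B0.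
set S := [set Re `|g u| | u in [set u : X | `|u| <= 1]].
have S0 : S !=set0 by exists (Re `|g 0|), 0 => //=; rewrite normr0.
have SB : ubound S b.
  move=> _ [u /= hu <-]; have := hB u.
  rewrite BE (ge0_complexE (normr_ge0 (g u))) (normcE u) -rmorphM lecR => h.
  apply: le_trans h _; rewrite -[X in _ <= X]mulr1; apply: ler_wpM2l; first exact: ltW.
  by move: hu; rewrite normcE (_ : 1 = 1%:C) // lecR.
exists (sup S); split=> [_ [u hu <-]|t].
  by rewrite (ge0_complexE (normr_ge0 _)) lecR; apply: ub_le_sup; [exists b|exists u].
rewrite ltcE => /andP[/eqP tIm tRe]; have [_ [u hu <-] ht] := sup_gt S0 tRe.
exists `|g u|; first by exists u.
by rewrite [X in _ < X](ge0_complexE (normr_ge0 _)) ltcE /= -tIm eqxx ht.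
Qed.

Lemma eq_odd_half m n : (m == n) = (odd m == odd n) && (m./2 == n./2).
Proof.
apply/eqP/andP => [->|[/eqP h1 /eqP h2]] //.
by rewrite -[m]odd_double_half -[n]odd_double_half h1 h2.
Qed.

Lemma complex_functional_le_norm (R : realType) (X : normedModType R[i]) (g : X -> R[i]) :
  (forall a u, g (a *: u) = a * g u) -> (forall u, `|Re (g u)| <= Re `|u|) ->
  forall u, `|g u| <= `|u|.
Proof.
move=> gZ hRe u; have [->|z0] := eqVneq (g u) 0; first by rewrite normr0.
(* Rotating u by the phase of g u makes the value of g real and nonnegative. *)
set th := `|g u| / g u.
have th1 : `|th| = 1 by rewrite /th normrM normfV normr_id mulfV ?normr_eq0.
have := hRe (th *: u); rewrite gZ /th divfK // normrZ th1 mul1r => h.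
rewrite (ge0_complexE (normr_ge0 (g u))) (normcE u) lecR.
exact: le_trans (ler_norm _) h.
Qed.

Section Realification.
Variables (R : realType) (X : normedModType R[i]).

Definition realified : Type := X.
HB.instance Definition _ := GRing.Zmodule.on realified.

Definition realified_scale (a : R) (v : realified) : realified := (a%:C *: (v : X) : X).

Lemma realified_scaleA a b v :
  realified_scale a (realified_scale b v) = realified_scale (a * b) v.
Proof. by rewrite /realified_scale scalerA -rmorphM. Qed.

Lemma realified_scale1 : left_id 1 realified_scale.
Proof. by move=> v; rewrite /realified_scale rmorph1 scale1r. Qed.

Lemma realified_scaleDr : right_distributive realified_scale +%R.
Proof. by move=> a u v; rewrite /realified_scale scalerDr. Qed.

Lemma realified_scaleDl v : {morph realified_scale^~ v : a b / a + b}.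
Proof. by move=> a b; rewrite /realified_scale rmorphD scalerDl. Qed.

HB.instance Definition _ := GRing.Zmodule_isLmodule.Build R realified
  realified_scaleA realified_scale1 realified_scaleDr realified_scaleDl.

Lemma realified_scaleE (a : R) (u : realified) : a *: u = (a%:C *: (u : X) : X).
Proof. by []. Qed.

Definition realified_norm (u : realified) : R := Re `|u : X|.

Lemma realified_normD u v : realified_norm (u + v) <= realified_norm u + realified_norm v.
Proof.
have := ler_normD (u : X) (v : X).
by rewrite (normcE (u + v : X)) (normcE (u : X)) (normcE (v : X)) -rmorphD lecR.
Qed.

Lemma realified_normZ a u : realified_norm (a *: u) = `|a| * realified_norm u.
Proof. by rewrite /realified_norm realified_scaleE normrZ normc_real Re_realM. Qed.

Variables (x : nat -> X) (xs : nat -> X -> R[i]).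
Hypothesis xs_dual : forall n, dual_elem (xs n).
Hypothesis xs_biorth : forall n k, xs n (x k) = (n == k)%:R.

Definition realified_basis k : realified := ((if odd k then 'i else 1) *: x k./2 : X).

Definition realified_coord k (u : realified) : R :=
  if odd k then Im (xs k./2 u) else Re (xs k./2 u).

Lemma realified_coord_linear n a u v :
  realified_coord n (a *: u + v) = a * realified_coord n u + realified_coord n v.
Proof.
rewrite /realified_coord realified_scaleE dual_elemD // dual_elemZ //.
by case: odd; rewrite ?ReD ?ImD ?Re_realM ?Im_realM.
Qed.

Lemma realified_coord_biorth n k : realified_coord n (realified_basis k) = (n == k)%:R.
Proof.
rewrite /realified_coord /realified_basis dual_elemZ // xs_biorth [n == k]eq_odd_half.
by case: (odd n); case: (odd k); case: (n./2 == k./2); simpc.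
Qed.

Lemma realified_coord_bounded alpha : (forall n u, `|xs n u| <= alpha%:C * `|u|) ->
  forall n u, `|realified_coord n u| <= alpha * realified_norm u.
Proof.
move=> hb n u; have := hb n./2 u.
rewrite (ge0_complexE (normr_ge0 (xs _ _))) (normcE (u : X)) -rmorphM lecR.
rewrite /realified_coord; case: odd; apply: le_trans.
  exact: Im_le_normc.
exact: Re_le_normc.
Qed.

Lemma xs_realified_coordE j u :
  xs j u = (realified_coord j.*2 u)%:C + 'i * (realified_coord j.*2.+1 u)%:C.
Proof.
by rewrite /realified_coord /= !odd_double /= doubleK uphalf_double; apply: complexE.
Qed.

Lemma realified_pair_sum N (c : nat -> R) :
  ((\sum_(k < N.*2) c k *: realified_basis k : realified) : X) =
  \sum_(j < N) ((c j.*2)%:C + 'i * (c j.*2.+1)%:C) *: x j.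
Proof.
rewrite (big_ord_double _ (fun k => c k *: realified_basis k)); apply: eq_bigr => j _.
rewrite !realified_scaleE /realified_basis /= !odd_double /= doubleK uphalf_double.
by rewrite scale1r scalerA (mulrC 'i) scalerDl.
Qed.

Lemma realified_dense : closure (span_seq x) = setT ->
  forall (v : realified) (eta : R), 0 < eta ->
  exists N (c : nat -> R), realified_norm (v - \sum_(i < N) c i *: realified_basis i) < eta.
Proof.
move=> hcl v eta eta0; have etaC0 : 0 < eta%:C by rewrite ltcR.
have [N [d hd]] := closure_span_approx hcl (v : X) etaC0.
pose c k := if odd k then Im (d k./2) else Re (d k./2).
exists N.*2, c; rewrite /realified_norm -ltcR -normcE (realified_pair_sum N c).
suff -> : \sum_(j < N) ((c j.*2)%:C + 'i * (c j.*2.+1)%:C) *: x j = \sum_(j < N) d j *: x j.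
  exact: hd.
by apply: eq_bigr => j _; rewrite /c /= !odd_double /= doubleK uphalf_double -complexE.
Qed.

Lemma realified_expansion g : finite_span realified_basis realified_coord g ->
  exists N, (g : X) = \sum_(j < N) xs j g *: x j.
Proof.
case=> N gE; exists N; have N2 : (N <= N.*2)%N by rewrite -addnn leq_addr.
rewrite {1}(finite_span_widen realified_coord_linear realified_coord_biorth N2 gE).
rewrite (realified_pair_sum N (realified_coord^~ g)).
by apply: eq_bigr => j _; rewrite -xs_realified_coordE.
Qed.

Lemma realified_tail_span n t g :
  tail_comb realified_basis realified_coord n.*2.+1 t g -> span_gt x n g.
Proof.
case=> gs head _; have [N gE] := realified_expansion gs; exists N, (xs^~ g); rewrite {1}gE.
apply: big_ord_prefix0 => j hj; rewrite xs_realified_coordE !head ?mulr0 ?addr0 ?scale0r //.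
  by rewrite ltnS leq_double.
by rewrite leqW // leq_double.
Qed.

Lemma realified_tail_supnorm n t e g : 2 * t < e ->
  tail_comb realified_basis realified_coord n t g -> supnorm_lt xs g e%:C.
Proof.
move=> te [_ _ b]; exists (2 * t)%:C => [|j]; first by rewrite ltcR.
rewrite xs_realified_coordE; apply: le_trans (ler_normD _ _) _.
rewrite normrM normc_i mul1r !normc_real -rmorphD lecR.
by have := b j.*2; have := b j.*2.+1; lra.
Qed.

Lemma realified_dual_combE N (w : nat -> R) : exists c : nat -> R[i],
  forall u, dual_comb realified_coord N w u = Re (\sum_(j < N) c j * xs j u).
Proof.
pose w' i := if (i < N)%N then w i else 0.
pose c j := (w' j.*2)%:C - 'i * (w' j.*2.+1)%:C; exists c => u.
rewrite /dual_comb (eq_bigr (fun i : 'I_N => w' i * realified_coord i u)); last first.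
  by move=> i _; rewrite /w' ltn_ord.
rewrite (@big_ord_suffix0 _ N N.*2 (fun i => w' i * realified_coord i u)).
- rewrite (big_ord_double _ (fun i => w' i * realified_coord i u)).
  rewrite (Re_sum N (fun j => c j * xs j u)); apply: eq_bigr => j _.
  by rewrite /c Re_conj_pairM /realified_coord /= !odd_double /= doubleK uphalf_double.
- by rewrite -addnn leq_addr.
- by move=> i hi; rewrite /w' ltnNge hi mul0r.
Qed.

Lemma realified_almost_annihilated_unit : ~ norming (dual_span xs) ->
  forall kappa, 0 < kappa -> exists v : realified, realified_norm v = 1 /\
    forall N w, (forall u, `|dual_comb realified_coord N w u| <= realified_norm u) ->
      `|dual_comb realified_coord N w v| <= kappa.
Proof.
move=> hnn k k0; apply: contrapT => hneg; apply: hnn.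
have [k1_ge0 k1_le] : 0 <= Num.min k 1 /\ Num.min k 1 <= k.
  by rewrite le_min ltW //= ler01 ge_min lexx.
apply: (@dual_span_norming _ _ xs (Num.min k 1)%:C (x 0%N)) => //.
- by rewrite ltcR lt_min k0 ltr01 /= (_ : 1 = 1%:C) // lecR ge_min lexx orbT.
- exact: biorth_neq0.
move=> v v1; have [N [w [wb wv]]] : exists N w,
    (forall u, `|dual_comb realified_coord N w u| <= realified_norm u) /\
    k < `|dual_comb realified_coord N w v|.
  apply: contrapT => h; apply: hneg; exists v; split; first by rewrite /realified_norm v1.
  by move=> N w wb; rewrite leNgt; apply/negP => wv; apply: h; exists N, w.
have [c dE] := realified_dual_combE N w.
have Gdual := dual_elem_comb N c xs_dual.
have [s hs] := dual_norm_exists_complex Gdual.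
have Gb : forall u, `|\sum_(j < N) c j * xs j u| <= `|u|.
  apply: (complex_functional_le_norm (g := fun u => \sum_(j < N) c j * xs j u)).
    exact: dual_elemZ Gdual.
  by move=> u; rewrite -dE; apply: wb.
apply: dual_span_normalize hs Gb v1 _ _; first by rewrite ler0c.
apply: le_lt_trans (_ : _ <= k%:C) _; first by rewrite lecR.
by apply: lt_le_trans (normc_ge_Re _); rewrite ltcR -dE.
Qed.

End Realification.

Theorem complex_case (R : realType) (X : completeNormedModType R[i]) : lemma3p7_for X.
Proof.
move=> x xs [hcl [hdual hbio]] [a2 ha2] hnn eps r m e0 r0.
have [e {}e0 ->] := gt0_complexP e0; have [{}r {}r0 ->] := gt0_complexP r0.
set alpha := Num.max (Re a2) 1.
have alpha0 : 0 < alpha by rewrite lt_max ltr01 orbT.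
have xs_bounded n u : `|xs n u| <= alpha%:C * `|u|.
  have [s hs] := dual_norm_exists_complex (hdual n).
  apply: le_trans (dual_norm_le (hdual n) hs u) _; apply: ler_wpM2r => //.
  have := ha2 n _ hs; rewrite lecE => /andP[_ h].
  by rewrite lecR (le_trans h) // le_max lexx.
have e2 : 0 < e / 2 by rewrite divr_gt0.
have [f [ft nf hg]] := tail_approximation (@realified_normD _ X) (@realified_normZ _ X)
  (realified_coord_linear hdual) (realified_coord_biorth hdual hbio) alpha0
  (realified_coord_bounded xs_bounded) (realified_dense hcl)
  (realified_almost_annihilated_unit hdual hbio hnn) m.*2.+1 e2 r0.
exists f; split.
- exact: realified_tail_span ft.
- by rewrite normcE -nf.
- by apply: realified_tail_supnorm ft; lra.
move=> n _ d d0; have [{}d {}d0 ->] := gt0_complexP d0.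
have d4 : 0 < d / 4 by rewrite divr_gt0.
have [g [gt fg]] := hg n.*2.+1 _ d4; exists g; split.
- exact: realified_tail_span gt.
- by apply: realified_tail_supnorm gt; lra.
by rewrite normcE ltcR; apply: lt_trans fg _; lra.
Qed.

Theorem lemma3p7 (R : realType) :
  (forall X : completeNormedModType R, lemma3p7_for X) /\
  (forall X : completeNormedModType R[i], lemma3p7_for X).
Proof. by split=> X; [apply: real_case|apply: complex_case]. Qed.
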